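(* Let $\mathcal{X}$ be a sample space and $\mathcal{Y}$ a finite label space, let $(\boldsymbol{x}^n, \mathbf{y}^n) \in \mathcal{X} \times \mathcal{Y}$, $n = 1, \ldots, \ell$, be training instances, let $\Delta: \mathcal{Y} \times \mathcal{Y} \to \mathbb{R}_{\ge 0}$ satisfy $\Delta(\mathbf{y}, \mathbf{y}) = 0$ for all $\mathbf{y}$, let $\Psi: \mathcal{X} \times \mathcal{Y} \to \mathbb{R}^d$, and let $C > 0$. Writing $\hat{\boldsymbol{w}} = (\boldsymbol{w}, b) \in \mathbb{R}^{d} \times \mathbb{R}$ and $\hat{\Psi}(\boldsymbol{x}, \mathbf{y}) = (\Psi(\boldsymbol{x}, \mathbf{y}), 1) \in \mathbb{R}^{d+1}$, consider the two optimization problems over $(\hat{\boldsymbol{w}}, \boldsymbol{\xi}) \in \mathbb{R}^{d+1} \times \mathbb{R}^{\ell}$: $(P_2)$: minimize $\|\boldsymbol{w}\|^2 + C \sum_{n=1}^{\ell} \xi_n$ subject to $\hat{\boldsymbol{w}}^\top \hat{\Psi}(\boldsymbol{x}^n, \mathbf{y}^n) - \hat{\boldsymbol{w}}^\top \hat{\Psi}(\boldsymbol{x}^n, \mathbf{y}) + \xi_n \ge \Delta(\mathbf{y}^n, \mathbf{y})$ for all $n = 1, \ldots, \ell$ and all $\mathbf{y} \in \mathcal{Y}$; $(P_3)$: minimize the same objective subject to the same constraints together with the additional constraints $\hat{\boldsymbol{w}}^\top \hat{\Psi}(\boldsymbol{x}^n, \mathbf{y}) \ge 0$ for all $n = 1,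 \ldots, \ell$ and all $\mathbf{y} \in \mathcal{Y}$. If $(P_2)$ attains its minimum, then the optimal values of $(P_2)$ and $(P_3)$ are equal (and the minimum of $(P_3)$ is attained).
   Context: This is the structured SVM training problem with an additional unregularized bias coordinate $b$ (note the objective regularizes only $\boldsymbol{w}$, not $b$); $(P_3)$ additionally requires that all scores $\hat{\boldsymbol{w}}^\top \hat{\Psi}(\boldsymbol{x}^n, \mathbf{y})$ be nonnegative. *)

From HB Require Import structures.
From mathcomp Require Import all_boot all_order all_algebra.
From mathcomp Require Import reals.
Set Implicit Arguments. Unset Strict Implicit. Unset Printing Implicit Defensive.
Import Order.TTheory GRing.Theory Num.Theory.
Local Open Scope ring_scope.

Section SSVM.
Variables (R : realType) (X : Type) (Y : finType) (d ell : nat).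
Variables (x : 'I_ell -> X) (y : 'I_ell -> Y) (Delta : Y -> Y -> R)
          (Psi : X -> Y -> 'rV[R]_d) (C : R).

Definition score (w : 'rV[R]_d) (b : R) (x0 : X) (y0 : Y) : R :=
  \sum_(i < d) w 0 i * Psi x0 y0 0 i + b.

Definition objective (w : 'rV[R]_d) (xi : 'rV[R]_ell) : R :=
  \sum_(i < d) w 0 i ^+ 2 + C * \sum_(n < ell) xi 0 n.

Definition feasible2 (w : 'rV[R]_d) (b : R) (xi : 'rV[R]_ell) : Prop :=
  forall (n : 'I_ell) (y0 : Y),
    score w b (x n) (y n) - score w b (x n) y0 + xi 0 n >= Delta (y n) y0.

Definition feasible3 (w : 'rV[R]_d) (b : R) (xi : 'rV[R]_ell) : Prop :=
  feasible2 w b xi /\ forall (n : 'I_ell) (y0 : Y), score w b (x n) y0 >= 0.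

Definition is_minimizer (F : 'rV[R]_d -> R -> 'rV[R]_ell -> Prop)
    (w : 'rV[R]_d) (b : R) (xi : 'rV[R]_ell) : Prop :=
  F w b xi /\ forall w' b' xi', F w' b' xi' -> objective w xi <= objective w' xi'.
End SSVM.

From HB Require Import structures.
From mathcomp Require Import all_boot all_order all_algebra.
From mathcomp Require Import reals.
Import Order.TTheory GRing.Theory Num.Theory.
Local Open Scope ring_scope.

(* The bias b is not regularized and cancels in every margin constraint of
   (P2), so raising it by the sum of the absolute values of all scores keeps
   a minimizer of (P2) feasible for (P2) with the same objective, while making
   every score nonnegative.  The shifted point is feasible for (P3), whose
   feasible set lies inside that of (P2), hence it minimizes (P3) too. *)

Lemma ler_sum_ge0_term {R : numDomainType} {I : finType} (f : I -> R) (i : I) :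
  (forall j, 0 <= f j) -> f i <= \sum_j f j.
Proof. by move=> f_ge0; rewrite (bigD1 i) //= lerDl; exact: sumr_ge0. Qed.

Lemma is_minimizer_sub {R : realType} {d ell : nat} (C : R)
    (F G : 'rV[R]_d -> R -> 'rV[R]_ell -> Prop) w b xi :
  (forall w' b' xi', G w' b' xi' -> F w' b' xi') ->
  is_minimizer C F w b xi -> G w b xi -> is_minimizer C G w b xi.
Proof. by move=> GF [_ minF] Gwbxi; split=> // w' b' xi' /GF /minF. Qed.

Section BiasShift.
Context {R : realType} {X : Type} {Y : finType} {d ell : nat}.
Variables (x : 'I_ell -> X) (y : 'I_ell -> Y) (Delta : Y -> Y -> R)
          (Psi : X -> Y -> 'rV[R]_d).

Lemma scoreDb w b c x0 y0 : score Psi w (b + c) x0 y0 = score Psi w b x0 y0 + c.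
Proof. by rewrite /score addrA. Qed.

Lemma feasible2Db w b c xi :
  feasible2 x y Delta Psi w b xi -> feasible2 x y Delta Psi w (b + c) xi.
Proof.
by move=> feas n y0; rewrite !scoreDb opprD addrACA subrr addr0; exact: feas.
Qed.

Definition score_bound w b : R :=
  \sum_(n < ell) \sum_(y0 : Y) `|score Psi w b (x n) y0|.

Lemma score_bound_shift_ge0 w b n y0 :
  0 <= score Psi w (b + score_bound w b) (x n) y0.
Proof.
have s_bound : `|score Psi w b (x n) y0| <= score_bound w b.
  pose f n1 y1 := `|score Psi w b (x n1) y1|.
  have f_ge0 n1 y1 : 0 <= f n1 y1 by exact: normr_ge0.
  apply: le_trans (ler_sum_ge0_term (f n) y0 (f_ge0 n)) _.
  by apply: (ler_sum_ge0_term (fun m => \sum_y1 f m y1)) => m; exact: sumr_ge0.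
rewrite scoreDb -lerBlDr sub0r lerNl.
by apply: le_trans _ s_bound; rewrite ler_normr lexx orbT.
Qed.

Lemma feasible3_shift w b xi :
  feasible2 x y Delta Psi w b xi ->
  feasible3 x y Delta Psi w (b + score_bound w b) xi.
Proof.
by move=> feas; split; [exact: feasible2Db | exact: score_bound_shift_ge0].
Qed.

End BiasShift.

Theorem claim2 (R : realType) (X : Type) (Y : finType) (d ell : nat)
    (x : 'I_ell -> X) (y : 'I_ell -> Y) (Delta : Y -> Y -> R)
    (Psi : X -> Y -> 'rV[R]_d) (C : R)
    (HDelta_nonneg : forall y1 y2 : Y, 0 <= Delta y1 y2)
    (HDelta_diag : forall y0 : Y, Delta y0 y0 = 0)
    (HC : 0 < C) :
  (exists w b xi, is_minimizer C (feasible2 x y Delta Psi) w b xi) ->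
  exists w2 b2 xi2 w3 b3 xi3,
    is_minimizer C (feasible2 x y Delta Psi) w2 b2 xi2 /\
    is_minimizer C (feasible3 x y Delta Psi) w3 b3 xi3 /\
    objective C w2 xi2 = objective C w3 xi3.
Proof.
move=> [w [b [xi min2]]].
set b3 := b + score_bound x Psi w b.
have min2_shift : is_minimizer C (feasible2 x y Delta Psi) w b3 xi.
  by case: min2 => feas minobj; split=> //; exact: feasible2Db.
exists w, b, xi, w, b3, xi; split=> //; split=> //.
apply: is_minimizer_sub min2_shift _; first by move=> ? ? ? [].
by apply: feasible3_shift; case: min2.
Qed.
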